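(* Let $R$ be an Artinian ring, with notation as in the context. Let $f_1,f_2\colon[R^n]\to[R^m]$ be $\mathrm{OVIC}(R)$-morphisms, $f_i=(f_i',f_i'')$. Assume that $f_1''=f_2''$ and that the free rows of $\Phi(f_1')$ and of $\Phi(f_2')$ are equal. Then $f_1=f_2$.
   Context: Let $R$ be an Artinian ring, $J(R)$ its Jacobson radical, $\overline R=R/J(R)$, and $\bar x$ (resp. $\bar A$) the image of an element (resp. entrywise image of a matrix). $\overline R\cong \mathrm{Mat}_{\mu_1}(\mathbb D_1)\times\cdots\times\mathrm{Mat}_{\mu_q}(\mathbb D_q)$ with division rings $\mathbb D_k$; put $\mu=\mu_1+\cdots+\mu_q$. Fix orthogonal idempotents $e^k_i\in R$ ($1\le k\le q$, $1\le i\le\mu_k$) with $\sum_{k,i}e^k_i=1$ lifting the orthogonal idempotents $\bar e^k_i$ of $\overline R$ given by the diagonal matrix units of this decomposition (so $e^k_iR\cong e^{k'}_{i'}R$ iff $k=k'$). Let $\mathbb L_{hk}=e^h_1Re^k_1$. The Peirce decomposition $R\cong\mathrm{End}(R_R)=\bigoplus\mathrm{Hom}(e^k_jR,e^h_iR)$, with the isomorphisms $e^h_iR\cong e^h_1R$, gives an injective ring homomorphism (the Artin–Wedderburn embedding) $\Phi\colon R\to\mathrm{Mat}_\mu(R)$, $x\mapsto(\Phi_{hk}(x))_{h,k=1}^q$ a $q\times q$ block matrix with $\Phi_{hk}(x)\in\mathrm{Mat}_{\mu_h,\mu_k}(\mathbb L_{hk})$; its reduction $\overline\Phi\colon\overline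 R\to\mathrm{Mat}_\mu(\overline R)$ sends $\bar x$ to the block-diagonal matrix whose $k$-th block is the $\mathrm{Mat}_{\mu_k}(\mathbb D_k)$-component of $\bar x$. Vectors $R^n$ are columns (right $R$-modules); an $R$-linear $h\colon R^a\to R^b$ is a $b\times a$ matrix, and $\Phi(h)\in\mathrm{Mat}_{\mu b,\mu a}(R)$ is obtained by replacing each entry $x$ by $\Phi(x)$; similarly $\overline\Phi(\bar h)$. Distinguished basis: for $1\le k\le q$, $1\le c\le a$, $1\le r\le\mu_k$, let $\vec v(k)_{(c-1)\mu_k+r}$ be the standard basis vector of $R^{\mu a}$ of index $(c-1)\mu+\mu_1+\cdots+\mu_{k-1}+r$; define $\vec w(k)_i$ in $R^{\mu b}$ the same way, bars denoting images over $\overline R$. For surjective $h\colon R^a\to R^b$ and each $k$, $\mathfrak S(h,k)$ is the smallest, in the lexicographic order on increasingly sorted sequences, subset $S\subset\{1,\dots,\mu_ka\}$ such that $\{\overline\Phi(\bar h)(\overline{\vec v(k)_j}):j\in S\}$ is a basis of the right $\mathbb D_k$-module $\bigoplus_{i=1}^{\mu_kb}\overline{\vec w(k)_i}\cdot\mathbb D_k$. A surjective $h$ is column-adapted if (i) for every $k$, writing $\mathfrak S(h,k)=\{j_1<\cdots<j_{\mu_kb}\}$, $\overline\Phi(\bar h)(\overline{\vec v(k)_{j_i}})=\overline{\vec w(k)_i}$ for all $i$, and (ii) $\Phi(h)(\vec v(k)_{j_i})=\vec w(k)_i$ for all $k,i$. $\mathrm{VIC}(R)$ has objects $[R^n]$,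 $n\ge0$; a morphism $[R^n]\to[R^m]$ is a pair $(f',f'')$ with $f'\colon R^n\to R^m$ injective $R$-linear, $f''\colon R^m\to R^n$ $R$-linear, $f''\circ f'=\mathrm{id}$; composition $(g',g'')\circ(f',f'')=(g'f',f''g'')$. $\mathrm{OVIC}(R)$ is the subcategory with the same objects and morphisms those $(f',f'')$ with $f''$ column-adapted. For an $\mathrm{OVIC}(R)$-morphism $(f',f'')\colon[R^n]\to[R^m]$, the rows of $\Phi(f')\in\mathrm{Mat}_{\mu m,\mu n}(R)$ are indexed by the standard basis of $R^{\mu m}$; the dependent rows are those indexed by $\vec v(k)_j$ (distinguished basis of $R^{\mu m}$) with $j\in\mathfrak S(f'',k)$ for some $k$, and all other rows are the free rows. *)

From HB Require Import structures.
From mathcomp Require Import all_boot all_order all_algebra.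
Unset Printing Implicit Defensive.
Import GRing.Theory.
Local Open Scope ring_scope.

Definition right_ideal {R : pzRingType} (I : R -> Prop) : Prop :=
  [/\ I 0, (forall x y, I x -> I y -> I (x + y)), (forall x, I x -> I (- x))
    & (forall x r, I x -> I (x * r))].

Definition left_ideal {R : pzRingType} (I : R -> Prop) : Prop :=
  [/\ I 0, (forall x y, I x -> I y -> I (x + y)), (forall x, I x -> I (- x))
    & (forall x r, I x -> I (r * x))].

Definition dcc {R : pzRingType} (ideal : (R -> Prop) -> Prop) : Prop :=
  forall I : nat -> R -> Prop,
    (forall n, ideal (I n)) -> (forall n x, I n.+1 x -> I n x) ->
    exists N, forall n, (N <= n)%N -> forall x, I N x -> I n x.

Definition artinian (R : pzRingType) : Prop :=
  dcc (@right_ideal R) /\ dcc (@left_ideal R).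

Definition maximal_right_ideal {R : pzRingType} (I : R -> Prop) : Prop :=
  [/\ right_ideal I, ~ I 1 &
      forall I' : R -> Prop, right_ideal I' -> (forall x, I x -> I' x) ->
        ~ I' 1 -> forall x, I' x -> I x].

Definition jacobson {R : pzRingType} (x : R) : Prop :=
  forall I : R -> Prop, maximal_right_ideal I -> I x.

Definition division_ring (D : nzRingType) : Prop :=
  forall d : D, d != 0 -> exists d' : D, d * d' = 1 /\ d' * d = 1.

(*   q factors; the k-th factor of R/J(R) is Mat_{mu_k}(D_k) with      *)
(*   mu_k = (mu k).+1 (positivity built in, index 0 = "index 1" of the *)
(*   paper).  pi k : R -> Mat_{mu_k}(D_k) is R -> R/J(R) -> k-th factor.*)
(*   e k i = e^k_i, a k i : e^k_iR -> e^k_1R (left mult.), b k i its   *)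
(*   inverse.                                                          *)

Definition AW_data {R : pzRingType} {q : nat} {mu : 'I_q -> nat}
    {D : 'I_q -> nzRingType}
    (pi : forall k : 'I_q, {rmorphism R -> 'M[D k]_((mu k).+1)})
    (e a b : forall k : 'I_q, 'I_((mu k).+1) -> R) : Prop :=
  [/\
      forall k, division_ring (D k),
      (* R/J(R) ~= prod_k Mat_{mu_k}(D_k) via the pi k *)
      (forall y : forall k : 'I_q, 'M[D k]_((mu k).+1),
          exists x : R, forall k, pi k x = y k),
      (forall x : R, (forall k, pi k x = 0) <-> jacobson x),
      [/\ forall k i, e k i * e k i = e k i,
          forall k l (i : 'I_((mu k).+1)) (j : 'I_((mu l).+1)),
            (k != l) || (val i != val j) -> e k i * e l j = 0
        & \sum_(k < q) \sum_(i < (mu k).+1) e k i = 1] &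
      [/\ (forall k i, pi k (e k i) = delta_mx i i),
          (forall k l i, l != k -> pi l (e k i) = 0) &
      (* isomorphisms e^k_i R ~= e^k_1 R, compatible with matrix units *)
      forall k i,
        [/\ a k i = e k ord0 * a k i * e k i,
            b k i = e k i * b k i * e k ord0,
            a k i * b k i = e k ord0,
            b k i * a k i = e k i
          & pi k (a k i) = delta_mx ord0 i /\ pi k (b k i) = delta_mx i ord0]]].

Section Phi.
Context {R : pzRingType} {q : nat} {mu : 'I_q -> nat}.
Implicit Types (a b : forall k : 'I_q, 'I_((mu k).+1) -> R).

Definition mutot := (\sum_(k < q) (mu k).+1)%N.

(* Phi(x) : block (h,k) has entries a^h_i x b^k_j in L_hk = e^h_1 R e^k_1 *)
Definition PhiR a b (x : R) : 'M[R]_(\sum_(k < q) (mu k).+1) :=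
  \mxblock_(h < q, k < q) (\matrix_(i < (mu h).+1, j < (mu k).+1) (a h i * x * b k j)).

Definition PhiM a b {r c : nat} (h : 'M[R]_(r, c)) :
    'M[R]_(\sum_(i < r) mutot, \sum_(j < c) mutot) :=
  \mxblock_(i < r, j < c) PhiR a b (h i j).

(* distinguished basis of R^{mu c}: the vector vec(k)_{(c'-1)mu_k + r'} is the
   standard basis vector of index (c'-1)mu + mu_1+...+mu_{k-1} + r'.  We index it
   by the pair (c', r'); its position in the distinguished family is
   dpos k (c', r') = c' * mu_k + r' (0-based). *)
Definition didx {c : nat} (k : 'I_q) (j : 'I_c * 'I_((mu k).+1)) :
    'I_(\sum_(i < c) mutot) :=
  @tagnat.Rank c (fun _ => mutot) j.1 (@tagnat.Rank q (fun k => (mu k).+1) k j.2).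

Definition dpos {c : nat} (k : 'I_q) (j : 'I_c * 'I_((mu k).+1)) : nat :=
  (val j.1 * (mu k).+1 + val j.2)%N.

End Phi.

Fixpoint lexle (s t : seq nat) : bool :=
  match s, t with
  | [::], _ => true
  | _ :: _, [::] => false
  | x :: s', y :: t' => (x < y)%N || ((x == y) && lexle s' t')
  end.

Section Frak.
Context {R : pzRingType} {q : nat} {mu : 'I_q -> nat} {D : 'I_q -> nzRingType}
  (pi : forall k : 'I_q, {rmorphism R -> 'M[D k]_((mu k).+1)})
  (e a b : forall k : 'I_q, 'I_((mu k).+1) -> R).

(* Entry of bar Phi(bar h) at (w(k)_i, v(k)_j), read in D_k: the entry lies in
   the corner bar e^k_1 bar R bar e^k_1, identified with D_k via pi k (.) 0 0. *)
Definition dcoord {r c : nat} (h : 'M[R]_(r, c)) (k : 'I_q)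
    (i : 'I_r * 'I_((mu k).+1)) (j : 'I_c * 'I_((mu k).+1)) : D k :=
  (pi k (PhiM a b h (didx k i) (didx k j))) ord0 ord0.

(* {bar Phi(bar h)(bar v(k)_j) : j in S} is a basis of the right D_k-module
   (+)_i bar w(k)_i . D_k *)
Definition basis_sel {r c : nat} (h : 'M[R]_(r, c)) (k : 'I_q)
    (S : {set 'I_c * 'I_((mu k).+1)}) : Prop :=
  (forall d : 'I_c * 'I_((mu k).+1) -> D k,
      (forall j, j \notin S -> d j = 0) ->
      (forall i, \sum_j dcoord h k i j * d j = 0) -> forall j, d j = 0) /\
  (forall y : 'I_r * 'I_((mu k).+1) -> D k,
      exists d : 'I_c * 'I_((mu k).+1) -> D k,
        (forall j, j \notin S -> d j = 0) /\
        (forall i, \sum_j dcoord h k i j * d j = y i)).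

Definition sorted_pos {c : nat} (k : 'I_q) (S : {set 'I_c * 'I_((mu k).+1)}) :
    seq nat :=
  sort leq [seq dpos k j | j <- enum S].

Definition frakS {r c : nat} (h : 'M[R]_(r, c)) (k : 'I_q)
    (S : {set 'I_c * 'I_((mu k).+1)}) : Prop :=
  basis_sel h k S /\
  forall S', basis_sel h k S' -> lexle (sorted_pos k S) (sorted_pos k S').

Definition surjective_map {r c : nat} (h : 'M[R]_(r, c)) : Prop :=
  forall y : 'cV[R]_r, exists x : 'cV[R]_c, h *m x = y.

(* column-adapted: for j = j_i the i-th element of frak S(h,k) (i.e. the
   element at position i of sorted_pos), (i) bar Phi(bar h) v(k)_{j_i} = bar w(k)_i
   and (ii) Phi(h) v(k)_{j_i} = w(k)_i.  Inside Phi(R), whose entries in block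
   (k,k) lie in L_kk = e^k_1 R e^k_1, the unit entry of w(k)_i is the identity
   e^k_1 of L_kk. *)
Definition column_adapted {r c : nat} (h : 'M[R]_(r, c)) : Prop :=
  surjective_map h /\
  forall k : 'I_q, exists S : {set 'I_c * 'I_((mu k).+1)},
    frakS h k S /\
    forall j, j \in S ->
      exists i : 'I_r * 'I_((mu k).+1),
        [/\ index (dpos k j) (sorted_pos k S) = dpos k i,
            (forall rho, jacobson (PhiM a b h rho (didx k j) -
                                   (if rho == didx k i then e k ord0 else 0)))
          & (forall rho, PhiM a b h rho (didx k j) =
                         (if rho == didx k i then e k ord0 else 0))].

Definition VIC_morphism {n m : nat} (f' : 'M[R]_(m, n)) (f'' : 'M[R]_(n, m)) : Prop :=
  injective (fun x : 'cV[R]_n => f' *m x) /\ f'' *m f' = 1%:M.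

Definition OVIC_morphism {n m : nat} (f' : 'M[R]_(m, n)) (f'' : 'M[R]_(n, m)) : Prop :=
  VIC_morphism f' f'' /\ column_adapted f''.

(* dependent rows of Phi(f') (rows indexed by the standard basis of R^{mu m}) *)
Definition dependent_row {n m : nat} (f'' : 'M[R]_(n, m))
    (rho : 'I_(\sum_(i < m) mutot)) : Prop :=
  exists (k : 'I_q) (S : {set 'I_m * 'I_((mu k).+1)}) (j : 'I_m * 'I_((mu k).+1)),
    [/\ frakS f'' k S, j \in S & rho = didx k j].

Definition free_row {n m : nat} (f'' : 'M[R]_(n, m))
    (rho : 'I_(\sum_(i < m) mutot)) : Prop := ~ dependent_row f'' rho.

End Frak.

(* Phi is an injective ring homomorphism on matrices, so X = Phi(f1') - Phi(f2')
   satisfies Phi(f'') X = Phi(f'' f1' - f'' f2') = 0, and the free rows of X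
   vanish by hypothesis.  By condition (ii) of column-adaptedness the dependent
   column v(k)_j of Phi(f'') is e^k_1 times the unit vector w(k)_i, and distinct
   dependent columns hit distinct rows w(k)_i.  Row w(k)_i of Phi(f'') X thus
   reads e^k_1 X_{v(k)_j} = 0, while every row of Phi(.) in the k-th block is
   fixed by e^k_1 on the left.  Hence X = 0 and f1' = f2'. *)
From HB Require Import structures.
From mathcomp Require Import all_boot all_order all_algebra.
From Stdlib Require Import Classical.
Import GRing.Theory.
Local Open Scope ring_scope.

Lemma mxblock_Rank {T : Type} {p q : nat} {p_ : 'I_p -> nat} {q_ : 'I_q -> nat}
    (B_ : forall (x : 'I_p) (y : 'I_q), 'M[T]_(p_ x, q_ y)) i k j l :
  (\mxblock_(x, y) B_ x y) (tagnat.Rank i j) (tagnat.Rank k l) = B_ i k j l.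
Proof. by have /matrixP/(_ j l) := mxblockK B_ i k; rewrite mxE. Qed.

Lemma mxBE {V : zmodType} {p s : nat} (A B : 'M[V]_(p, s)) i j :
  (A - B) i j = A i j - B i j.
Proof. by rewrite !mxE. Qed.

Lemma mulmx_eq0_entry {R : pzRingType} {p s t : nat}
    {M : 'M[R]_(p, s)} {X : 'M[R]_(s, t)} w rho :
  M *m X = 0 -> (forall r, r != rho -> M w r = 0 \/ row r X = 0) ->
  forall j, M w rho * X rho j = 0.
Proof.
move=> MX0 vanish j; have /matrixP/(_ w j) := MX0.
rewrite !mxE (bigD1 rho) //= big1 ?addr0 // => r /vanish[-> | /rowP/(_ j)].
  by rewrite mul0r.
by rewrite !mxE => ->; rewrite mulr0.
Qed.

Lemma lexle_anti s t : lexle s t -> lexle t s -> s = t.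
Proof.
elim: s t => [|x s IHs] [|y t] //=.
by case: ltngtP => //= <- /IHs st /st ->.
Qed.

Section Indexing.
Context {q : nat} {mu : 'I_q -> nat}.

Lemma dpos_inj {c : nat} (k : 'I_q) : injective (@dpos q mu c k).
Proof.
move=> [x1 x2] [y1 y2]; rewrite /dpos /= => E.
have e2 : val x2 = val y2.
  by have := congr1 (fun z => z %% (mu k).+1)%N E; rewrite /= !modnMDl !modn_small.
have e1 : val x1 = val y1.
  by have := congr1 (fun z => z %/ (mu k).+1)%N E;
    rewrite /= !divnMDl // !divn_small // !addn0.
by congr pair; apply: val_inj.
Qed.

Lemma didx_surj {c : nat} (s : 'I_(\sum_(i < c) @mutot q mu)) :
  exists k (tj : 'I_c * 'I_((mu k).+1)), s = didx k tj.
Proof.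
exists (tagnat.sig1 (tagnat.sig2 s)), (tagnat.sig1 s, tagnat.sig2 (tagnat.sig2 s)).
by rewrite /didx /= !tagnat.sig2K.
Qed.

Lemma didx_eq {c : nat} k k' (i : 'I_c * 'I_((mu k).+1)) (i' : 'I_c * 'I_((mu k').+1)) :
  didx k i = didx k' i' -> k = k' /\ dpos k i = dpos k' i'.
Proof.
move/(congr1 val)/eqP; rewrite /didx tagnat.eq_Rank => /andP[/eqP e1].
rewrite tagnat.eq_Rank => /andP[/eqP ek /eqP e2].
by split=> //; subst k'; rewrite /dpos e1; congr addn; exact: e2.
Qed.

Lemma index_sorted_pos_inj {c : nat} {k} {S : {set 'I_c * 'I_((mu k).+1)}} {j j'} :
  j \in S -> j' \in S ->
  index (dpos k j) (sorted_pos k S) = index (dpos k j') (sorted_pos k S) -> j = j'.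
Proof.
have mem x : x \in S -> dpos k x \in sorted_pos k S.
  by move=> xS; rewrite mem_sort map_f // mem_enum.
move=> /mem jS /mem j'S eq_idx; apply: (@dpos_inj c k).
by rewrite -(nth_index 0 jS) -(nth_index 0 j'S) eq_idx.
Qed.

End Indexing.

Section Embedding.
Context {R : pzRingType} {q : nat} {mu : 'I_q -> nat}.
Context {e a b : forall k : 'I_q, 'I_((mu k).+1) -> R}.
Hypothesis sum_e : \sum_(k < q) \sum_(i < (mu k).+1) e k i = 1.
Hypothesis mul_ba : forall k i, b k i * a k i = e k i.

Lemma mulr_split (x y : R) :
  x * y = \sum_(k < q) \sum_(i < (mu k).+1) (x * b k i) * (a k i * y).
Proof.
rewrite -{1}[x]mulr1 -sum_e mulr_sumr mulr_suml; apply: eq_bigr => k _.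
rewrite mulr_sumr mulr_suml; apply: eq_bigr => i _.
by rewrite -mul_ba !mulrA.
Qed.

Lemma Peirce_decomposition (x : R) :
  x = \sum_(h < q) \sum_(i < (mu h).+1) \sum_(k < q) \sum_(j < (mu k).+1)
        b h i * (a h i * x * b k j) * a k j.
Proof.
transitivity ((\sum_(k < q) \sum_(i < (mu k).+1) e k i) * x *
              (\sum_(k < q) \sum_(i < (mu k).+1) e k i)).
  by rewrite sum_e mulr1 mul1r.
rewrite -mulrA mulr_suml; apply: eq_bigr => h _.
rewrite mulr_suml; apply: eq_bigr => i _.
rewrite 2!mulr_sumr; apply: eq_bigr => k _.
rewrite 2!mulr_sumr; apply: eq_bigr => j _.
by rewrite -!mul_ba !mulrA.
Qed.

Lemma PhiR_sum (I : finType) (F : I -> R) :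
  PhiR a b (\sum_i F i) = \sum_i PhiR a b (F i).
Proof.
apply/matrixP => s t; rewrite summxE !mxE mulr_sumr mulr_suml.
by apply: eq_bigr => i _; rewrite !mxE.
Qed.

Lemma PhiR_mul (x y : R) : PhiR a b (x * y) = PhiR a b x *m PhiR a b y.
Proof.
rewrite /PhiR mul_mxblock; apply: eq_mxblock => h k.
apply/matrixP => i j; rewrite !mxE summxE -!mulrA mulrA mulr_split.
apply: eq_bigr => l _; rewrite mxE; apply: eq_bigr => t _.
by rewrite !mxE !mulrA.
Qed.

Lemma PhiM_mul {r c d : nat} (A : 'M[R]_(r, c)) (B : 'M[R]_(c, d)) :
  PhiM a b (A *m B) = PhiM a b A *m PhiM a b B.
Proof.
rewrite /PhiM mul_mxblock; apply: eq_mxblock => i j.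
by rewrite mxE PhiR_sum; apply: eq_bigr => l _; rewrite PhiR_mul.
Qed.

Lemma PhiM_didx {r c : nat} (A : 'M[R]_(r, c))
    h (si : 'I_r * 'I_((mu h).+1)) k (tj : 'I_c * 'I_((mu k).+1)) :
  PhiM a b A (didx h si) (didx k tj) = a h si.2 * A si.1 tj.1 * b k tj.2.
Proof. by rewrite /PhiM /didx !mxblock_Rank mxE. Qed.

Lemma PhiM_inj {r c : nat} : injective (@PhiM R q mu a b r c).
Proof.
move=> A B /matrixP eqAB; apply/matrixP => s t.
rewrite (Peirce_decomposition (A s t)) (Peirce_decomposition (B s t)).
apply: eq_bigr => h _; apply: eq_bigr => i _; apply: eq_bigr => k _.
apply: eq_bigr => j _.
by have := eqAB (didx h (s, i)) (didx k (t, j)); rewrite !PhiM_didx => ->.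
Qed.

Hypothesis mul_e_a : forall k i, e k ord0 * a k i = a k i.

Lemma PhiM_corner {r c : nat} (A : 'M[R]_(r, c)) k (tj : 'I_r * 'I_((mu k).+1)) s :
  e k ord0 * PhiM a b A (didx k tj) s = PhiM a b A (didx k tj) s.
Proof.
have [l [ui ->]] := didx_surj s.
by rewrite !PhiM_didx !mulrA mul_e_a.
Qed.

End Embedding.

Lemma frakS_uniq {R : pzRingType} {q : nat} {mu : 'I_q -> nat} {D : 'I_q -> nzRingType}
    (pi : forall k : 'I_q, {rmorphism R -> 'M[D k]_((mu k).+1)})
    (a b : forall k : 'I_q, 'I_((mu k).+1) -> R) {r c} (h : 'M[R]_(r, c)) k S S' :
  frakS pi a b h k S -> frakS pi a b h k S' -> S = S'.
Proof.
move=> [selS minS] [selS' minS'].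
have eq_pos : sorted_pos k S = sorted_pos k S'.
  by apply: lexle_anti; [apply: minS | apply: minS'].
apply/setP => x.
have : (dpos k x \in sorted_pos k S) = (dpos k x \in sorted_pos k S').
  by rewrite eq_pos.
by rewrite !mem_sort !(mem_map (dpos_inj k)) !mem_enum.
Qed.

Arguments frakS_uniq {R q mu D pi a b r c h k S S'}.

Section ColumnAdapted.
Context {R : pzRingType} {q : nat} {mu : 'I_q -> nat} {D : 'I_q -> nzRingType}.
Context {proj : forall k : 'I_q, {rmorphism R -> 'M[D k]_((mu k).+1)} }.
Context {e a b : forall k : 'I_q, 'I_((mu k).+1) -> R} {r c : nat} {h : 'M[R]_(r, c)}.
Hypothesis h_adapted : column_adapted proj e a b h.

Lemma column_adapted_col {k S j} : frakS proj a b h k S -> j \in S ->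
  exists i : 'I_r * 'I_((mu k).+1),
    index (dpos k j) (sorted_pos k S) = dpos k i /\
    forall rho, PhiM a b h rho (didx k j) = if rho == didx k i then e k ord0 else 0.
Proof.
move=> fS jS; have [S0 [fS0 cols]] := h_adapted.2 k.
rewrite (frakS_uniq fS fS0) in jS *.
by have [i [idx _ col]] := cols j jS; exists i.
Qed.

Lemma column_adapted_dependent_col {k S j} : frakS proj a b h k S -> j \in S ->
  exists i : 'I_r * 'I_((mu k).+1),
    (forall rho, PhiM a b h rho (didx k j) = if rho == didx k i then e k ord0 else 0) /\
    (forall rho, dependent_row proj a b h rho -> rho != didx k j ->
       PhiM a b h (didx k i) rho = 0).
Proof.
move=> fS jS; have [i [idx col]] := column_adapted_col fS jS.
exists i; split=> // _ [k' [S' [j' [fS' j'S' ->]]]] neq_jj'.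
have [i' [idx' ->]] := column_adapted_col fS' j'S'.
case: eqP => [/didx_eq[ek eq_pos] | _] //; subst k'.
rewrite (frakS_uniq fS' fS) in j'S' idx'.
by rewrite (index_sorted_pos_inj jS j'S' (etrans idx (etrans eq_pos (esym idx')))) eqxx
  in neq_jj'.
Qed.

Lemma column_adapted_mul_eq0 {t : nat} (X : 'M[R]_(\sum_(i < c) @mutot q mu, t)) :
  (forall k tj s, e k ord0 * X (didx k tj) s = X (didx k tj) s) ->
  (forall rho, ~ dependent_row proj a b h rho -> row rho X = 0) ->
  PhiM a b h *m X = 0 -> X = 0.
Proof.
move=> corner free_row0 PhiX0; apply/row_matrixP => rho; rewrite row0.
have [[k [S [j [fS jS ->]]]] | ] := classic (dependent_row proj a b h rho);
  last exact: free_row0.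
have [i [col others]] := column_adapted_dependent_col fS jS.
apply/rowP => s; rewrite [LHS]mxE [RHS]mxE.
have := mulmx_eq0_entry (didx k i) (didx k j) PhiX0 _ s.
rewrite col eqxx corner => -> // rho' neq_rho'.
have [dep | free] := classic (dependent_row proj a b h rho').
  by left; apply: others.
by right; apply: free_row0.
Qed.

End ColumnAdapted.

Theorem lemma4p6
  (R : pzRingType) (q : nat) (mu : 'I_q -> nat) (D : 'I_q -> nzRingType)
  (pi : forall k : 'I_q, {rmorphism R -> 'M[D k]_((mu k).+1)})
  (e a b : forall k : 'I_q, 'I_((mu k).+1) -> R) :
  artinian R ->
  AW_data pi e a b ->
  forall (n m : nat) (f1' f2' : 'M[R]_(m, n)) (f1'' f2'' : 'M[R]_(n, m)),
    OVIC_morphism pi e a b f1' f1'' ->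
    OVIC_morphism pi e a b f2' f2'' ->
    f1'' = f2'' ->
    (forall rho : 'I_(\sum_(i < m) @mutot q mu),
        free_row pi a b f1'' rho ->
        row rho (PhiM a b f1') = row rho (PhiM a b f2')) ->
    (f1', f1'') = (f2', f2'').
Proof.
move=> _ [_ _ _ [e_idem _ sum_e] [_ _ ab_units]] n m f1' f2' f1'' f2''
  [[_ inv1] adapted] [[_ inv2] _] eq_f'' free_eq; subst f2''.
have mul_ba k i : b k i * a k i = e k i by have [] := ab_units k i.
have mul_e_a k i : e k ord0 * a k i = a k i.
  by have [-> _ _ _ _] := ab_units k i; rewrite !mulrA e_idem.
set X := PhiM a b f1' - PhiM a b f2'.
have PhiX0 : PhiM a b f1'' *m X = 0.
  by rewrite mulmxBr -!(PhiM_mul sum_e mul_ba) inv1 inv2 subrr.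
have free_row0 rho : ~ dependent_row pi a b f1'' rho -> row rho X = 0.
  by move/free_eq; rewrite linearB /= => ->; rewrite subrr.
have X0 : X = 0.
  apply: (column_adapted_mul_eq0 adapted) free_row0 PhiX0 => k tj s.
  by rewrite mxBE mulrBr !(PhiM_corner mul_e_a).
by congr pair; apply: (PhiM_inj sum_e mul_ba); apply/eqP; rewrite -subr_eq0 -/X X0.
Qed.
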